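(* Let $\delta_{\ell,0}>0$ and define $\delta_{\ell,i+1}=\delta_{\ell,i}/(1+\delta_{\ell,i})^2$ for $i\ge0$. Then there exists a constant $c_\ell>0$ such that for all $i\ge1$, $$\frac1{2i}-\frac{c_\ell+\log i}{8i^2}<\delta_{\ell,i}<\frac1{2i}.$$
   Context: In the paper, $\delta_{\ell,i}$ is the eigenvalue at iteration $i$ of deterministic EKI of the generalized eigenvalue problem $H\Gamma_iH^\top w_\ell=\delta_{\ell,i}\Sigma w_\ell$ along a fixed eigenvector $w_\ell$, and these satisfy the stated recurrence. *)

From Stdlib Require Import Reals.
Open Scope R_scope.

Definition eki_recurrence (delta : nat -> R) : Prop :=
  forall i : nat, delta (S i) = delta i / (1 + delta i) ^ 2.

(** With [u i = / delta i] the recurrence becomes [u (S i) = u i + 2 + delta i].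
    Positivity of [delta] gives [u i > 2 i], i.e. the upper bound.  Feeding
    [delta i < 1 / (2 i)] back in and comparing the harmonic sum with [ln]
    gives [u i <= 2 i + K + ln i / 2] for a constant [K], and inverting this
    yields the lower bound. *)
From Stdlib Require Import Reals Lra.
Open Scope R_scope.

Lemma ln_ge_1_sub_inv (x : R) : 0 < x -> 1 - / x <= ln x.
Proof.
  intros Hx.
  pose proof (exp_ineq1_le (- ln x)) as H.
  rewrite exp_Ropp, exp_ln in H by exact Hx.
  lra.
Qed.

Lemma ln_ge_0 (x : R) : 1 <= x -> 0 <= ln x.
Proof.
  intros Hx.
  pose proof (ln_ge_1_sub_inv x ltac:(lra)) as H.
  assert (/ x <= 1) by (rewrite <- Rinv_1; apply Rinv_le_contravar; lra).
  lra.
Qed.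

Lemma ln_succ_sub_ge (x : R) : 0 < x -> / (x + 1) <= ln (x + 1) - ln x.
Proof.
  intros Hx.
  assert (Hq : 0 < (x + 1) / x) by (apply Rdiv_lt_0_compat; lra).
  pose proof (ln_ge_1_sub_inv _ Hq) as H.
  unfold Rdiv in H.
  rewrite ln_mult, ln_Rinv in H by (try apply Rinv_0_lt_compat; lra).
  replace (/ ((x + 1) * / x)) with (1 - / (x + 1)) in H by (field; lra).
  lra.
Qed.

(** Inverting [/ x <= a + b] loses only a second-order term: [/ a - / (a + b)]
    equals [b / (a (a + b))], which is below [b / a ^ 2]. *)
Lemma lower_bound_of_inv_le (a b x : R) :
  0 < a -> 0 < b -> 0 < x -> / x <= a + b -> / a - b / a ^ 2 < x.
Proof.
  intros Ha Hb Hx Hinv.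
  assert (Hx' : / (a + b) <= x).
  { rewrite <- (Rinv_inv x). apply Rinv_le_contravar; [|exact Hinv].
    apply Rinv_0_lt_compat; exact Hx. }
  assert (E : / a - b / a ^ 2 - / (a + b) = - (b * b / (a ^ 2 * (a + b))))
    by (field; lra).
  assert (0 < b * b / (a ^ 2 * (a + b))).
  { apply Rdiv_lt_0_compat; [nra|].
    apply Rmult_lt_0_compat; [apply pow_lt|]; lra. }
  lra.
Qed.

Section EKIRecurrence.

Variable delta : nat -> R.
Hypothesis delta0_pos : 0 < delta 0%nat.
Hypothesis delta_rec : eki_recurrence delta.

Lemma eki_pos (i : nat) : 0 < delta i.
Proof.
  induction i as [|i IH]; [exact delta0_pos|].
  rewrite delta_rec.
  apply Rdiv_lt_0_compat; [exact IH | apply pow_lt; lra].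
Qed.

Lemma eki_inv_succ (i : nat) : / delta (S i) = / delta i + 2 + delta i.
Proof.
  rewrite delta_rec. pose proof (eki_pos i). field. lra.
Qed.

Lemma eki_inv_gt (n : nat) : (1 <= n)%nat -> 2 * INR n < / delta n.
Proof.
  induction 1 as [|n _ IH]; rewrite eki_inv_succ.
  - pose proof (Rinv_0_lt_compat _ delta0_pos). simpl. lra.
  - pose proof (eki_pos n). rewrite S_INR. lra.
Qed.

Lemma eki_upper (n : nat) : (1 <= n)%nat -> delta n < 1 / (2 * INR n).
Proof.
  intros Hn.
  pose proof (eki_inv_gt n Hn) as Hgt.
  assert (HINR : 0 < 2 * INR n) by (apply lt_0_INR in Hn; lra).
  unfold Rdiv. rewrite Rmult_1_l, <- (Rinv_inv (delta n)).
  apply Rinv_lt_contravar; [|exact Hgt].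
  apply Rmult_lt_0_compat; [exact HINR | apply Rinv_0_lt_compat, eki_pos].
Qed.

Definition eki_shift : R := / delta 0%nat + delta 0%nat + 1 / 2.

Lemma eki_shift_pos : 0 < eki_shift.
Proof.
  unfold eki_shift. pose proof (Rinv_0_lt_compat _ delta0_pos). lra.
Qed.

(** The term [- 1 / (2 n)] makes the induction close: it absorbs the
    [delta n < 1 / (2 n)] of the next step. *)
Lemma eki_inv_le (n : nat) : (1 <= n)%nat ->
  / delta n <= 2 * INR n + eki_shift + ln (INR n) / 2 - 1 / (2 * INR n).
Proof.
  induction 1 as [|n Hn IH]; rewrite eki_inv_succ.
  - simpl INR. rewrite ln_1. unfold eki_shift. lra.
  - pose proof (eki_upper n Hn) as Hup.
    assert (HINR : 0 < INR n) by (apply lt_0_INR; exact Hn).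
    pose proof (ln_succ_sub_ge _ HINR) as Hln.
    rewrite S_INR.
    replace (1 / (2 * (INR n + 1))) with (/ (INR n + 1) / 2) by (field; lra).
    lra.
Qed.

Lemma eki_lower (n : nat) : (1 <= n)%nat ->
  1 / (2 * INR n) - (2 * eki_shift + ln (INR n)) / (8 * INR n ^ 2) < delta n.
Proof.
  intros Hn.
  assert (H1 : 1 <= INR n) by (apply (le_INR 1); exact Hn).
  pose proof (ln_ge_0 _ H1) as Hln.
  pose proof eki_shift_pos as HK.
  assert (Hinv : / delta n <= 2 * INR n + (eki_shift + ln (INR n) / 2)).
  { pose proof (eki_inv_le n Hn).
    assert (0 < 1 / (2 * INR n)) by (apply Rdiv_lt_0_compat; lra).
    lra. }
  pose proof (lower_bound_of_inv_le (2 * INR n) (eki_shift + ln (INR n) / 2) (delta n)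
                ltac:(lra) ltac:(lra) (eki_pos n) Hinv) as Hlow.
  replace (1 / (2 * INR n) - (2 * eki_shift + ln (INR n)) / (8 * INR n ^ 2))
    with (/ (2 * INR n) - (eki_shift + ln (INR n) / 2) / (2 * INR n) ^ 2) by (field; lra).
  exact Hlow.
Qed.

End EKIRecurrence.

Theorem proposition3p6 (delta : nat -> R) :
  0 < delta 0%nat ->
  eki_recurrence delta ->
  exists c : R, 0 < c /\
    forall i : nat, (1 <= i)%nat ->
      1 / (2 * INR i) - (c + ln (INR i)) / (8 * (INR i) ^ 2) < delta i /\
      delta i < 1 / (2 * INR i).
Proof.
  intros H0 Hrec.
  exists (2 * eki_shift delta).
  split.
  - pose proof (eki_shift_pos delta H0). lra.
  - intros i Hi. split.
    + exact (eki_lower delta H0 Hrec i Hi).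
    + exact (eki_upper delta H0 Hrec i Hi).
Qed.
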